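(* Let $(V,\langle\cdot\,,\cdot\rangle_V)$ be an admissible $\mathrm{Cl}_{r,s}$-module with $s>0$, and let $J_{z_k}$, $k=1,\ldots,r+s$, be the representations of the orthonormal generators $z_1,\ldots,z_{r+s}$ of $\mathrm{Cl}_{r,s}$. Then: (1) the scalar product space $(V,\langle\cdot\,,\cdot\rangle_V)$ is neutral, i.e. the maximal dimensions of subspaces on which the restriction of $\langle\cdot\,,\cdot\rangle_V$ is positive definite, respectively negative definite, coincide; in particular $\dim V$ is even; (2) if $W$ is an admissible sub-module of a $\mathrm{Cl}_{r,s}$-module $(V,\langle\cdot\,,\cdot\rangle_V)$, then its orthogonal complement $W^\perp=\{v\in V:\langle w,v\rangle_V=0\ \forall w\in W\}$ is also an admissible sub-module. Hence an admissible $\mathrm{Cl}_{r,s}$-module $(V,\langle\cdot\,,\cdot\rangle_V)$ decomposes into admissible sub-modules.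
   Context: A scalar product is a real symmetric non-degenerate bilinear form. $\mathbb R^{r,s}$ is $\mathbb R^{r+s}$ with the scalar product whose quadratic form is $x_1^2+\dots+x_r^2-x_{r+1}^2-\dots-x_{r+s}^2$, and $\mathrm{Cl}_{r,s}$ is the Clifford algebra generated by $\mathbb R^{r,s}$ with relation $z^2=-\langle z,z\rangle\cdot1$; orthonormal generators $z_1,\ldots,z_{r+s}$ satisfy $\langle z_i,z_j\rangle=0$ ($i\neq j$), $\langle z_i,z_i\rangle=1$ for $i\le r$, $=-1$ for $i>r$. A $\mathrm{Cl}_{r,s}$-module is a real vector space $V$ with a representation $J\colon\mathrm{Cl}_{r,s}\to\mathrm{End}(V)$, so $J_z^2=-\langle z,z\rangle\mathrm{Id}_V$ for $z\in\mathbb R^{r,s}$. It is admissible if $V$ carries a scalar product $\langle\cdot\,,\cdot\rangle_V$ with $\langle J_zu,v\rangle_V=-\langle u,J_zv\rangle_V$ for all $z\in\mathbb R^{r,s}$, $u,v\in V$. An admissible sub-module of an admissible module $(V,\langle\cdot\,,\cdot\rangle_V)$ is a Clifford sub-module $W$ such that the restriction of $\langle\cdot\,,\cdot\rangle_V$ to $W$ is an admissible scalar product on $W$ (in particular non-degenerate). *)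

From HB Require Import structures.
From mathcomp Require Import all_boot all_order all_algebra.
From mathcomp Require Import reals.
Set Implicit Arguments. Unset Strict Implicit. Unset Printing Implicit Defensive.
Import Order.TTheory GRing.Theory Num.Theory.
Local Open Scope ring_scope.

(* V = 'rV[R]_n (row vectors); endomorphisms act on the right: v |-> v *m A. *)

Definition qf_rs {R : realType} (r s : nat) (z : 'rV[R]_(r + s)) : R :=
  \sum_(i < r + s) (if (i < r)%N then 1 else -1) * z 0 i ^+ 2.

Definition gen_rs {R : realType} (r s : nat) (k : 'I_(r + s)) : 'rV[R]_(r + s) :=
  delta_mx 0 k.

(* A Cl_{r,s}-module structure on 'rV_n: a linear map z |-> J_z with
   J_z^2 = - <z,z> Id (universal property of the Clifford algebra). *)
Definition cl_module {R : realType} (r s n : nat)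
  (J : {linear 'rV[R]_(r + s) -> 'M[R]_n}) : Prop :=
  forall z : 'rV[R]_(r + s), J z *m J z = - (qf_rs z) %:M.

Definition form {R : realType} (n : nat) (G : 'M[R]_n) (u v : 'rV[R]_n) : R :=
  (u *m G *m v^T) 0 0.

Definition scalar_product {R : realType} (n : nat) (G : 'M[R]_n) : Prop :=
  G^T = G /\ G \in unitmx.

Definition skew_for {R : realType} (r s n : nat)
  (J : {linear 'rV[R]_(r + s) -> 'M[R]_n}) (G : 'M[R]_n) : Prop :=
  forall (z : 'rV[R]_(r + s)) (u v : 'rV[R]_n),
    form G (u *m J z) v = - form G u (v *m J z).

Definition admissible {R : realType} (r s n : nat)
  (J : {linear 'rV[R]_(r + s) -> 'M[R]_n}) (G : 'M[R]_n) : Prop :=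
  cl_module J /\ scalar_product G /\ skew_for J G.

(* Subspaces of V are represented by the row space of a matrix W. *)
Definition posdef_on {R : realType} (n : nat) (G : 'M[R]_n) (U : 'M[R]_n) : Prop :=
  forall v : 'rV[R]_n, (v <= U)%MS -> v != 0 -> 0 < form G v v.
Definition negdef_on {R : realType} (n : nat) (G : 'M[R]_n) (U : 'M[R]_n) : Prop :=
  forall v : 'rV[R]_n, (v <= U)%MS -> v != 0 -> form G v v < 0.

Definition is_max_pos_dim {R : realType} (n : nat) (G : 'M[R]_n) (d : nat) : Prop :=
  (exists U, posdef_on G U /\ \rank U = d) /\
  (forall U, posdef_on G U -> (\rank U <= d)%N).
Definition is_max_neg_dim {R : realType} (n : nat) (G : 'M[R]_n) (d : nat) : Prop :=
  (exists U, negdef_on G U /\ \rank U = d) /\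
  (forall U, negdef_on G U -> (\rank U <= d)%N).

Definition neutral {R : realType} (n : nat) (G : 'M[R]_n) : Prop :=
  forall p q, is_max_pos_dim G p -> is_max_neg_dim G q -> p = q.

Definition cl_submodule {R : realType} (r s n : nat)
  (J : {linear 'rV[R]_(r + s) -> 'M[R]_n}) (W : 'M[R]_n) : Prop :=
  forall z : 'rV[R]_(r + s), (W *m J z <= W)%MS.

(* Admissible sub-module: Clifford sub-module on which the restriction of the
   scalar product is an admissible scalar product (symmetric -- automatic --,
   non-degenerate, and J-skew). *)
Definition admissible_submodule {R : realType} (r s n : nat)
  (J : {linear 'rV[R]_(r + s) -> 'M[R]_n}) (G : 'M[R]_n) (W : 'M[R]_n) : Prop :=
  cl_submodule J W /\
  (forall u v : 'rV[R]_n, (u <= W)%MS -> (v <= W)%MS -> form G u v = form G v u) /\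
  (forall w : 'rV[R]_n, (w <= W)%MS ->
     (forall w' : 'rV[R]_n, (w' <= W)%MS -> form G w w' = 0) -> w = 0) /\
  (forall (z : 'rV[R]_(r + s)) (u v : 'rV[R]_n), (u <= W)%MS -> (v <= W)%MS ->
     form G (u *m J z) v = - form G u (v *m J z)).

Definition is_orth_compl {R : realType} (n : nat) (G : 'M[R]_n) (W Wp : 'M[R]_n) : Prop :=
  forall v : 'rV[R]_n, (v <= Wp)%MS <-> (forall w : 'rV[R]_n, (w <= W)%MS -> form G w v = 0).

From Pilot Require Import Defs.
From HB Require Import structures.
From mathcomp Require Import all_boot all_order all_algebra.
From mathcomp Require Import reals.
Set Implicit Arguments. Unset Strict Implicit. Unset Printing Implicit Defensive.
Import Order.TTheory GRing.Theory Num.Theory.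
Local Open Scope ring_scope.
Local Notation form := Defs.form.

(* A generator z_k with <z_k,z_k> = -1, which exists as s > 0, gives an
   involution J := J_{z_k} that is skew for the scalar product, hence
   <uJ, vJ> = -<u, v>.  So J maps positive definite subspaces to negative
   definite ones of the same dimension and back, and det J^2 = (-1)^n forces
   n to be even.  For (2), the orthogonal complement Wp is the kernel of
   v |-> v G W^T, so dim Wp = n - dim W; non-degeneracy on W gives
   W :&: Wp = 0, hence V = W + Wp, and non-degeneracy on Wp follows from that
   of G.  Skewness of the J_z turns J-invariance of W into that of Wp. *)

Section Forms.
Variables (R : realType) (n : nat).
Implicit Types (G A U : 'M[R]_n) (u v w : 'rV[R]_n).

Lemma eq_mx_form (M N : 'M[R]_n) :
  (forall u v, form M u v = form N u v) -> M = N.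
Proof.
move=> eqMN; apply/matrixP=> i j.
have formE P : form P (delta_mx 0 i) (delta_mx 0 j) = P i j.
  by rewrite /form trmx_delta -colE -rowE !mxE.
by rewrite -formE eqMN formE.
Qed.

Lemma form_sym G u v : G^T = G -> form G u v = form G v u.
Proof.
move=> symG; rewrite /form.
transitivity ((u *m G *m v^T)^T 0 0); first by rewrite [in RHS]mxE.
by rewrite !trmx_mul trmxK symG mulmxA.
Qed.

Lemma formDr G u v1 v2 : form G u (v1 + v2) = form G u v1 + form G u v2.
Proof. by rewrite /form linearD mulmxDr mxE. Qed.

Lemma form_delta G w j : form G w (delta_mx 0 j) = (w *m G) 0 j.
Proof. by rewrite /form trmx_delta -colE !mxE. Qed.

Lemma form_nondegenerate G w :
  G \in unitmx -> (forall v, form G w v = 0) -> w = 0.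
Proof.
move=> unitG w_orth; have wG0 : w *m G = 0.
  by apply/rowP=> j; rewrite -form_delta w_orth mxE.
by rewrite -[w](mulmxK unitG) wG0 mul0mx.
Qed.

Section AntiIsometry.
Variables (G A : 'M[R]_n).
Hypotheses (skewA : A *m G = - (G *m A^T)) (invA : A *m A = 1%:M).

Lemma anti_congruence : A *m G *m A^T = - G.
Proof. by rewrite skewA mulNmx -mulmxA -trmx_mul invA trmx1 mulmx1. Qed.

Lemma form_anti w : form G (w *m A) (w *m A) = - form G w w.
Proof.
rewrite /form trmx_mul !mulmxA -(mulmxA w A) -(mulmxA w (A *m G)).
by rewrite anti_congruence mulmxN mulNmx mxE.
Qed.

Lemma row_free_anti : row_free A.
Proof. by rewrite row_free_unit; case: (mulmx1_unit invA). Qed.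

Lemma posdef_on_anti U : posdef_on G U -> negdef_on G (U *m A).
Proof.
move=> posU v /submxP[D ->] nz_v; rewrite mulmxA form_anti oppr_lt0.
apply: posU; first exact: submxMl.
by apply: contraNneq nz_v; rewrite mulmxA => ->; rewrite mul0mx.
Qed.

Lemma negdef_on_anti U : negdef_on G U -> posdef_on G (U *m A).
Proof.
move=> negU v /submxP[D ->] nz_v; rewrite mulmxA form_anti oppr_gt0.
apply: negU; first exact: submxMl.
by apply: contraNneq nz_v; rewrite mulmxA => ->; rewrite mul0mx.
Qed.

Lemma neutral_anti : neutral G.
Proof.
move=> p q [[U [posU <-]] maxp] [[U' [negU' <-]] maxq].
apply/eqP; rewrite eqn_leq; apply/andP; split.
  by rewrite -(mxrankMfree U row_free_anti); apply/maxq/posdef_on_anti.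
by rewrite -(mxrankMfree U' row_free_anti); apply/maxp/negdef_on_anti.
Qed.

Lemma even_anti : G \in unitmx -> ~~ odd n.
Proof.
rewrite unitmxE unitfE => detG_nz; apply/negP => odd_n.
have := congr1 determinant anti_congruence.
rewrite !det_mulmx det_tr -scaleN1r -mul_scalar_mx det_mulmx det_scalar.
rewrite -signr_odd odd_n expr1 mulrAC => eq_det.
have sq_detA : \det A * \det A = -1 by apply: (mulIf detG_nz).
by have := sqr_ge0 (\det A); rewrite expr2 sq_detA oppr_ge0 ler10.
Qed.

End AntiIsometry.

Section OrthCompl.
Variables (G W Wp : 'M[R]_n).
Hypotheses (symG : G^T = G) (unitG : G \in unitmx).
Hypothesis orthWp : is_orth_compl G W Wp.

Lemma orth_compl_kermx : (Wp == kermx (G *m W^T))%MS.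
Proof.
have sub_ker v : (v <= Wp)%MS <-> (v <= kermx (G *m W^T))%MS.
  have colE : W *m G *m v^T = \col_i form G (row i W) v.
    by apply/colP=> i; rewrite [RHS]mxE /form -row_mul -row_mul [RHS]mxE.
  have trE : (v *m (G *m W^T))^T = W *m G *m v^T.
    by rewrite !trmx_mul trmxK symG.
  rewrite orthWp sub_kermx -trmx_eq0 trE colE; split => [orth_v | /eqP eq0 w].
    by apply/eqP/colP=> i; rewrite !mxE orth_v ?row_sub.
  case/submxP=> D ->; rewrite /form -!mulmxA (mulmxA W) colE eq0.
  by rewrite mulmx0 mxE.
by apply/andP; split; apply/row_subP=> i; apply/sub_ker; apply: row_sub.
Qed.

Lemma mxrank_orth_compl : \rank Wp = (n - \rank W)%N.
Proof.
rewrite (eqmx_rank orth_compl_kermx) mxrank_ker -mxrank_tr trmx_mul symG trmxK.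
by rewrite mxrankMfree // row_free_unit.
Qed.

Hypothesis nondegW :
  forall w, (w <= W)%MS -> (forall w', (w' <= W)%MS -> form G w w' = 0) -> w = 0.

Lemma capmx_orth_compl : (W :&: Wp == (0 : 'M[R]_n))%MS.
Proof.
apply/andP; split; last exact: sub0mx.
apply/row_subP=> i; rewrite submx0.
have := row_sub i (W :&: Wp)%MS; rewrite sub_capmx => /andP[sub_iW sub_iWp].
apply/eqP/nondegW => // w' sub_w'W.
by rewrite form_sym //; apply: (iffLR (orthWp _)).
Qed.

Lemma addsmx_orth_compl : (W + Wp == (1%:M : 'M[R]_n))%MS.
Proof.
rewrite submx1 sub1mx /row_full /=.
have := mxrank_sum_cap W Wp; rewrite (eqmx_rank capmx_orth_compl) mxrank0.
by rewrite addn0 mxrank_orth_compl subnKC ?rank_leq_col // => ->.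
Qed.

Lemma orth_compl_nondegenerate w :
  (w <= Wp)%MS -> (forall w', (w' <= Wp)%MS -> form G w w' = 0) -> w = 0.
Proof.
move=> sub_wWp orth_w; apply: (@form_nondegenerate G w unitG) => v.
have /sub_addsmxP[[a b] ->] : (v <= W + Wp)%MS.
  by rewrite (eqmxP addsmx_orth_compl) submx1.
rewrite formDr [form G w (b *m Wp)]orth_w ?submxMl // addr0 form_sym //.
by apply: (iffLR (orthWp _)) => //; apply: submxMl.
Qed.

End OrthCompl.

End Forms.

Lemma qf_rs_gen (R : realType) (r s : nat) (k : 'I_(r + s)) :
  qf_rs (gen_rs k) = (if (k < r)%N then 1 else -1) :> R.
Proof.
rewrite /qf_rs (bigD1 k) //= big1 => [|i /negbTE neq_ik].
  by rewrite /gen_rs mxE !eqxx expr1n mulr1 addr0.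
by rewrite /gen_rs mxE neq_ik andbF expr0n mulr0.
Qed.

Section CliffordModule.
Variables (R : realType) (r s n : nat).
Variables (J : {linear 'rV[R]_(r + s) -> 'M[R]_n}) (G : 'M[R]_n).

Lemma cl_module_gen_neg (k : 'I_(r + s)) :
  cl_module J -> (r <= k)%N -> J (gen_rs k) *m J (gen_rs k) = 1%:M.
Proof.
by move=> clJ le_rk; rewrite clJ qf_rs_gen ltnNge le_rk /= raddfN opprK.
Qed.

Lemma skew_for_mx z : skew_for J G -> J z *m G = - (G *m (J z)^T).
Proof.
move=> skewJ; apply: eq_mx_form => u v; have := skewJ z u v.
by rewrite /form trmx_mul !mulmxA => ->; rewrite mulmxN mulNmx [RHS]mxE !mulmxA.
Qed.

Lemma orth_compl_cl_submodule W Wp :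
  skew_for J G -> cl_submodule J W -> is_orth_compl G W Wp -> cl_submodule J Wp.
Proof.
move=> skewJ subW orthWp z; apply/row_subP=> i; rewrite row_mul.
apply/orthWp => w sub_wW; rewrite -[LHS]opprK -skewJ.
rewrite (iffLR (orthWp _)) ?row_sub ?oppr0 //.
exact: submx_trans (submxMr (J z) sub_wW) (subW z).
Qed.

End CliffordModule.

Theorem proposition2p1 (R : realType) (r s n : nat)
  (J : {linear 'rV[R]_(r + s) -> 'M[R]_n}) (G : 'M[R]_n) :
  (0 < s)%N -> admissible J G ->
  (neutral G /\ ~~ odd n) /\
  (forall W Wp : 'M[R]_n, admissible_submodule J G W -> is_orth_compl G W Wp ->
     admissible_submodule J G Wp /\
     (W + Wp == (1%:M : 'M[R]_n))%MS /\ (W :&: Wp == (0 : 'M[R]_n))%MS).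
Proof.
move=> s_gt0 [clJ [[symG unitG] skewJ]].
have lt_r_rs : (r < r + s)%N by rewrite -{1}(addn0 r) ltn_add2l s_gt0.
pose k := Ordinal lt_r_rs.
have invJk := cl_module_gen_neg clJ (leqnn r : (r <= k)%N).
have skewJk := skew_for_mx (gen_rs k) skewJ.
split.
  by split; [exact: neutral_anti skewJk invJk | exact: even_anti skewJk invJk unitG].
move=> W Wp [subW [_ [nondegW _]]] orthWp; split; last split.
- split; first exact: orth_compl_cl_submodule orthWp.
  split; first by move=> u v _ _; apply: form_sym.
  split; first exact: orth_compl_nondegenerate symG unitG orthWp nondegW.
  by move=> z u v _ _; apply: skewJ.
- exact: addsmx_orth_compl symG unitG orthWp nondegW.
- exact: capmx_orth_compl symG orthWp nondegW.
Qed.
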